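(* Let $N\ge 2$ be an integer, $\lambda\in[0,\frac{\pi}{2})$, and let $\mathcal{M}=(M_1,M_2,M_3)$ be a measurement scenario with $M_3=\{C_0,C_1\}$, $C_0,C_1\in[0,\pi)$. Then the quantum scenario $(|B(\lambda)\rangle,\mathcal{M})$ is a paradox whenever $\lambda,C_0,C_1,M_1,M_2$ satisfy one of the following conditions: (a) $N=2$ and the parameters describe the standard GHZ paradox, namely $\lambda=0$ and $M_1=M_2=M_3=\{0,\frac{\pi}{2}\}$. (b) $N>2$, $N$ is even, and there exist integers $s,t$ with $s$ even, $t$ odd, $1\le s<N$ and $1\le t\le s-1$, such that $C_0=0$, $\delta(\lambda,C_1)\equiv \frac{\pi}{N}s$, $\beta(\lambda,C_1)\equiv-\frac{\pi}{N}t$; and $M_1=M_2=\{\frac{k\pi}{N}:k=0,\dots,N-1\}$. In particular, if moreover $t=s/2$, then $\lambda=\frac{\pi}{2}-\frac{\pi}{N}t$ and $C_1=\frac{\pi}{2}$. (c) There exist integers $s,t'$ with $s$ even, $1\le s<N$ and $0\le t'\le s/2-1$, such that $C_1=\pi-C_0$, $\delta(\lambda,C_0)\equiv\delta(\lambda,C_1)\equiv\frac{\pi}{N}s$, $\beta(\lambda,C_0)\equiv-\frac{\pi}{N}(t'+\frac12)$, $\beta(\lambda,C_1)\equiv-\frac{\pi}{N}(s-t'-\frac12)$; and $M_1=\{\frac{k\pi}{N}:k=0,\dots,N-1\}$, $M_2=\{\frac{(k+\frac12)\pi}{N}:k=0,\dots,N-1\}$. (d) There exist integers $s,s',t'$ with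 $s,s'$ even, $t'$ odd, $1\le s<s'<N$ and $1\le|t'|\le N-1$, such that $\delta(\lambda,C_0)\equiv\frac{\pi}{N}s$, $\delta(\lambda,C_1)\equiv\frac{\pi}{N}s'$, $\beta(\lambda,C_1)-\beta(\lambda,C_0)\equiv\frac{\pi}{N}t'$; and, letting $t$ be the real number with $0<t<s$ and $\beta(\lambda,C_0)\equiv-\frac{\pi}{N}t$ and setting $\nu:=\lceil t\rceil-t$, we have $M_1=\{\frac{k\pi}{N}:k=0,\dots,N-1\}$ and $M_2=\{\frac{(k+\nu)\pi}{N}:k=0,\dots,N-1\}$.
   Context: Throughout, $\equiv$ denotes equality modulo $2\pi$. For $\varphi\in\mathbb{R}$, the equatorial measurement on a qubit is $E_\varphi=\cos\varphi\, X+\sin\varphi\, Y$, with $+1$ eigenvector $|\varphi\rangle=\frac{1}{\sqrt2}(|0\rangle+e^{i\varphi}|1\rangle)$ and $-1$ eigenvector $|\varphi+\pi\rangle$; outcomes $+1,-1$ are relabelled $0,1$. Measurements are identified with their angles. A measurement scenario $\mathcal{M}=(M_1,M_2,M_3)$ consists of finite sets $M_i\subseteq[0,\pi)$ of measurement angles for qubit $i$; its contexts are the triples $(A,B,C)\in M_1\times M_2\times M_3$. For a three-qubit state $|\psi\rangle$, the event $(A,B,C)\to(a,b,c)$ ($a,b,c\in\{0,1\}$) is impossible if $(\langle A+a\pi|\otimes\langle B+b\pi|\otimes\langle C+c\pi|)|\psi\rangle=0$. The quantum scenario $(|\psi\rangle,\mathcal{M})$ is a paradox if for every assignment $g$ of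 an outcome in $\{0,1\}$ to each measurement of $M_1$, $M_2$, $M_3$ (treated as disjoint sets) there is a context $(A,B,C)$ such that the event $(A,B,C)\to(g(A),g(B),g(C))$ is impossible. For $\lambda\in[0,\frac{\pi}{2})$ let $|v_\lambda\rangle=\cos\frac{\lambda}{2}|0\rangle+\sin\frac{\lambda}{2}|1\rangle$, $|w_\lambda\rangle=\sin\frac{\lambda}{2}|0\rangle+\cos\frac{\lambda}{2}|1\rangle$, and define the interpolant state $|B(\lambda)\rangle=\frac{1}{\sqrt2}(|0\rangle|0\rangle|v_\lambda\rangle+|1\rangle|1\rangle|w_\lambda\rangle)$. Define (modulo $2\pi$) $\beta(\lambda,\varphi)=\varphi-2\arctan\left(\frac{\cos\frac{\lambda}{2}\sin\varphi}{\sin\frac{\lambda}{2}+\cos\frac{\lambda}{2}\cos\varphi}\right)$ and $\delta(\lambda,\varphi)=\beta(\lambda,\varphi+\pi)-\beta(\lambda,\varphi)\equiv\pi-2\arctan(\sin\varphi\tan\lambda)$. *)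

From Stdlib Require Import Reals ZArith List.
From Coquelicot Require Import Coquelicot.
Open Scope R_scope.

Definition eqm2pi (x y : R) : Prop := exists k : Z, x - y = IZR k * (2 * PI).

(* |phi> = (|0> + e^{i phi}|1>)/sqrt 2, as a function of the basis bit *)
Definition ket (phi : R) (b : bool) : C :=
  if b then (cos phi / sqrt 2, sin phi / sqrt 2) else (1 / sqrt 2, 0).

(* eigenvector for outcome a of E_phi : |phi + a pi> *)
Definition outcome_ket (phi : R) (a : bool) : bool -> C :=
  ket (if a then phi + PI else phi).

Definition state3 := bool -> bool -> bool -> C.

Definition bools : list bool := false :: true :: nil.

(* (<A+a pi| (x) <B+b pi| (x) <C+c pi|) |psi> *)
Definition amplitude (psi : state3) (A B Cc : R) (a b c : bool) : C :=
  fold_right Cplus 0%C (map (fun x =>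
  fold_right Cplus 0%C (map (fun y =>
  fold_right Cplus 0%C (map (fun z =>
    Cmult (Cmult (Cmult (Cconj (outcome_ket A a x)) (Cconj (outcome_ket B b y)))
                 (Cconj (outcome_ket Cc c z))) (psi x y z)) bools)) bools)) bools).

Definition impossible (psi : state3) (A B Cc : R) (a b c : bool) : Prop :=
  amplitude psi A B Cc a b c = 0%C.

Definition meas_set (M : R -> Prop) : Prop :=
  (exists l : list R, forall x, M x <-> In x l) /\ (forall x, M x -> 0 <= x < PI).

Definition is_scenario (M1 M2 M3 : R -> Prop) : Prop :=
  meas_set M1 /\ meas_set M2 /\ meas_set M3.

(* outcome assignments: one function per party (the M_i treated as disjoint) *)
Definition paradox (psi : state3) (M1 M2 M3 : R -> Prop) : Prop :=
  forall g1 g2 g3 : R -> bool,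
    exists A B Cc, M1 A /\ M2 B /\ M3 Cc /\ impossible psi A B Cc (g1 A) (g2 B) (g3 Cc).

(* |B(lambda)> = (|0>|0>|v> + |1>|1>|w>)/sqrt 2 *)
Definition vlam (lam : R) (z : bool) : R := if z then sin (lam/2) else cos (lam/2).
Definition wlam (lam : R) (z : bool) : R := if z then cos (lam/2) else sin (lam/2).
Definition Bstate (lam : R) : state3 := fun x y z =>
  RtoC (match x, y with
        | false, false => vlam lam z / sqrt 2
        | true, true => wlam lam z / sqrt 2
        | _, _ => 0
        end).

(* beta(lam,phi) = phi - 2 arctan(cos(lam/2) sin phi / (sin(lam/2)+cos(lam/2) cos phi)),
   taken modulo 2 pi; when the denominator vanishes, 2 arctan(+-oo) = +-pi = pi (mod 2 pi). *)
Definition beta (lam phi : R) : R :=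
  let d := sin (lam/2) + cos (lam/2) * cos phi in
  if Req_EM_T d 0 then phi - PI
  else phi - 2 * atan (cos (lam/2) * sin phi / d).

Definition delta (lam phi : R) : R := beta lam (phi + PI) - beta lam phi.

Definition Rceil (x : R) : Z := (1 - up (- x))%Z.

Definition grid (N : nat) (off : R) (x : R) : Prop :=
  exists k : nat, (k < N)%nat /\ x = (INR k + off) * PI / INR N.

(* Writing w = sin(lam/2) + cos(lam/2) e^{iC}, the angle beta(lam, C) satisfies
   e^{i beta} w = cos(lam/2) + sin(lam/2) e^{iC}.  Expanding the amplitude of |B(lam)>, this is
   exactly what makes the event (A, B, C) -> (a, b, c) impossible as soon as
   (A + a pi) + (B + b pi) = beta(lam, C + c pi) + pi modulo 2 pi.
   In each of the cases (a)-(d), the four angles beta(lam, C_j + c pi) + pi are grid angles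
   (x + nu) pi / N, and every such target x for C_1 differs from every target for C_0 by an odd
   integer.  An outcome assignment on a grid of N angles selects, in Z/2N, exactly one element of
   each pair {i, i + N}.  If no selected i of the first party and j of the second party had i + j
   equal to one of the two targets x, y fixed by the third party's outcomes, the set selected by
   the first party would be invariant under translation by y - x, hence by N (y - x) = N mod 2N,
   which swaps every pair.
   For the last claim, beta(lam, C_1) = -theta and beta(lam, C_1 + pi) = theta have equal cosines,
   and cos beta = (cos C + sin lam) / (1 + sin lam cos C) then forces cos C_1 = 0 and
   cos theta = sin lam. *)

From Stdlib Require Import Reals ZArith List Lra Lia Nsatz Classical.
From Coquelicot Require Import Coquelicot.
Open Scope R_scope.

Lemma eqm2pi_eq x y : x = y -> eqm2pi x y.
Proof. intros ->. exists 0%Z. simpl. ring. Qed.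

Lemma eqm2pi_sym x y : eqm2pi x y -> eqm2pi y x.
Proof. intros [k Hk]. exists (- k)%Z. rewrite opp_IZR. lra. Qed.

Lemma eqm2pi_trans x y z : eqm2pi x y -> eqm2pi y z -> eqm2pi x z.
Proof. intros [k Hk] [l Hl]. exists (k + l)%Z. rewrite plus_IZR. lra. Qed.

Lemma eqm2pi_add x y x' y' : eqm2pi x y -> eqm2pi x' y' -> eqm2pi (x + x') (y + y').
Proof. intros [k Hk] [l Hl]. exists (k + l)%Z. rewrite plus_IZR. lra. Qed.

Lemma eqm2pi_cos_sin x y : eqm2pi x y -> cos x = cos y /\ sin x = sin y.
Proof.
  intros [k Hk]. destruct (Z.abs_spec k) as [[Hk0 Ek] | [Hk0 Ek]].
  - replace x with (y + 2 * INR (Z.abs_nat k) * PI)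
      by (rewrite INR_IZR_INZ, Zabs2Nat.id_abs, Ek; lra).
    split; [apply cos_period | apply sin_period].
  - replace y with (x + 2 * INR (Z.abs_nat k) * PI)
      by (rewrite INR_IZR_INZ, Zabs2Nat.id_abs, Ek, opp_IZR; lra).
    split; symmetry; [apply cos_period | apply sin_period].
Qed.

Lemma cos_sin_sqr x : cos x * cos x + sin x * sin x = 1.
Proof. pose proof (sin2_cos2 x). unfold Rsqr in *. lra. Qed.

Lemma cos_sin_atan q :
  cos (atan q) * cos (atan q) * (1 + q * q) = 1 /\ sin (atan q) = q * cos (atan q).
Proof.
  assert (Hcos : 0 < cos (atan q)) by (destruct (atan_bound q); apply cos_gt_0; lra).
  assert (Hsin : sin (atan q) = q * cos (atan q)).
  { rewrite <- (tan_atan q) at 2. unfold tan. field. lra. }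
  split; [|exact Hsin].
  pose proof (cos_sin_sqr (atan q)) as H1. rewrite Hsin in H1. lra.
Qed.

Lemma beta_rotation lam phi :
  let c := cos (lam / 2) in let s := sin (lam / 2) in
  cos (beta lam phi) * (s + c * cos phi) - sin (beta lam phi) * (c * sin phi) = c + s * cos phi /\
  sin (beta lam phi) * (s + c * cos phi) + cos (beta lam phi) * (c * sin phi) = s * sin phi.
Proof.
  intros c s.
  pose proof (cos_sin_sqr (lam / 2)) as Hcs. pose proof (cos_sin_sqr phi) as Hphi.
  unfold beta; fold c s in Hcs |- *. clearbody c s.
  destruct (Req_EM_T (s + c * cos phi) 0) as [D0 | D0].
  - rewrite cos_minus, sin_minus, cos_PI, sin_PI. split; nsatz.
  - set (q := c * sin phi / (s + c * cos phi)).
    assert (Hq : q * (s + c * cos phi) = c * sin phi) by (unfold q; field; exact D0).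
    destruct (cos_sin_atan q) as [Hc Hs].
    rewrite cos_minus, sin_minus, cos_2a, sin_2a, Hs. split; nsatz.
Qed.

Lemma cos_beta lam phi : 1 + sin lam * cos phi <> 0 ->
  cos (beta lam phi) = (cos phi + sin lam) / (1 + sin lam * cos phi).
Proof.
  intro HK.
  destruct (beta_rotation lam phi) as [H1 H2].
  pose proof (cos_sin_sqr (lam / 2)) as Hcs. pose proof (cos_sin_sqr phi) as Hphi.
  assert (Hsin : sin lam = 2 * sin (lam / 2) * cos (lam / 2))
    by (rewrite <- sin_2a; f_equal; field).
  apply (Rmult_eq_reg_r (1 + sin lam * cos phi)); [|exact HK].
  unfold Rdiv. rewrite Rmult_assoc, Rinv_l, Rmult_1_r by exact HK.
  rewrite Hsin in *. nsatz.
Qed.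

Lemma beta_add_PI lam phi : beta lam (phi + PI) = beta lam phi + delta lam phi.
Proof. unfold delta. ring. Qed.

Lemma beta_of_sin_eq0 lam phi : sin phi = 0 -> cos lam <> 0 -> beta lam phi = phi.
Proof.
  intros Hs Hlam. unfold beta.
  destruct (Req_EM_T (sin (lam / 2) + cos (lam / 2) * cos phi) 0) as [D0 | D0].
  - exfalso. apply Hlam. pose proof (cos_sin_sqr phi) as Hphi.
    replace lam with (2 * (lam / 2)) by field. rewrite cos_2a. nsatz.
  - rewrite Hs, Rmult_0_r. unfold Rdiv. rewrite Rmult_0_l, atan_0. ring.
Qed.

Definition outcome_angle (phi : R) (a : bool) : R := if a then phi + PI else phi.

Lemma amplitude_Bstate lam A B C a b c :
  let c2 := cos (lam / 2) in let s2 := sin (lam / 2) in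
  let th := outcome_angle A a + outcome_angle B b in
  let phi := outcome_angle C c in
  amplitude (Bstate lam) A B C a b c =
    ((/ sqrt 2) ^ 4 * (c2 + s2 * cos phi + cos th * (s2 + c2 * cos phi) - sin th * (c2 * sin phi)),
     (/ sqrt 2) ^ 4 * (- (s2 * sin phi) - cos th * (c2 * sin phi) - sin th * (s2 + c2 * cos phi))).
Proof.
  intros c2 s2 th phi. unfold c2, s2, th, phi, outcome_angle.
  unfold amplitude, outcome_ket, bools, ket, Bstate, vlam, wlam; simpl.
  unfold Cplus, Cmult, Cconj, RtoC; simpl.
  rewrite cos_plus, sin_plus. unfold Rdiv.
  apply injective_projections; simpl; ring.
Qed.

Lemma impossible_Bstate lam A B C a b c :
  eqm2pi (outcome_angle A a + outcome_angle B b) (beta lam (outcome_angle C c) + PI) ->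
  impossible (Bstate lam) A B C a b c.
Proof.
  intro H. unfold impossible. rewrite amplitude_Bstate. cbv zeta.
  destruct (eqm2pi_cos_sin _ _ H) as [-> ->]. rewrite neg_cos, neg_sin.
  destruct (beta_rotation lam (outcome_angle C c)) as [H1 H2].
  apply injective_projections; simpl; apply Rmult_eq_0_compat_l; lra.
Qed.

Definition antiperiodic (n : Z) (P : Z -> bool) : Prop :=
  forall i k, P (i + n * k)%Z = xorb (Z.odd k) (P i).

Lemma antiperiodic_sum_hits n P Q x y : (0 < n)%Z ->
  antiperiodic n P -> antiperiodic n Q -> Z.odd (y - x) = true ->
  exists i, P i = true /\ (Q (x - i)%Z = true \/ Q (y - i)%Z = true).
Proof.
  intros Hn HP HQ Hodd. apply NNPP; intro Hmiss.
  assert (Hx : forall i, P i = true -> Q (x - i)%Z = false).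
  { intros i Hi. apply not_true_is_false. intro Hq. eauto. }
  assert (Hy : forall i, P i = true -> Q (y - i)%Z = false).
  { intros i Hi. apply not_true_is_false. intro Hq. eauto. }
  assert (Hstep : forall i, P i = true -> P (i + (y - x))%Z = true).
  { intros i Hi.
    assert (Hq : Q (x - i + n * 1)%Z = true) by (rewrite HQ, Hx; auto).
    set (j := (y - (x - i + n * 1))%Z).
    assert (Hj : P j = false).
    { apply not_true_is_false. intro Hj. pose proof (Hy j Hj) as F. unfold j in F.
      replace (y - (y - (x - i + n * 1)))%Z with (x - i + n * 1)%Z in F by ring. congruence. }
    replace (i + (y - x))%Z with (j + n * 1)%Z by (unfold j; ring).
    rewrite HP, Hj. reflexivity. }
  assert (Hiter : forall (m : nat) i, P i = true -> P (i + Z.of_nat m * (y - x))%Z = true).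
  { induction m as [|m IH]; intros i Hi.
    - replace (i + Z.of_nat 0 * (y - x))%Z with i by lia. exact Hi.
    - replace (i + Z.of_nat (S m) * (y - x))%Z with (i + Z.of_nat m * (y - x) + (y - x))%Z by lia.
      auto. }
  assert (Hne : exists i, P i = true).
  { destruct (P 0%Z) eqn:E; [eauto|]. exists (0 + n * 1)%Z. rewrite HP, E. reflexivity. }
  destruct Hne as [i Hi].
  pose proof (Hiter (Z.to_nat n) i Hi) as F.
  rewrite Z2Nat.id, HP, Hodd, Hi in F by lia. discriminate.
Qed.

(* grid_choice N nu g i holds iff the outcome g assigns to the grid point of index i mod N turns
   its angle into (i + nu) pi / N modulo 2 pi; exactly one of i and i + N is chosen. *)
Definition grid_point (N : nat) (nu : R) (i : Z) : R :=
  (INR (Z.to_nat (i mod Z.of_nat N)) + nu) * PI / INR N.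

Definition grid_choice (N : nat) (nu : R) (g : R -> bool) (i : Z) : bool :=
  Bool.eqb (Z.odd (i / Z.of_nat N)) (g (grid_point N nu i)).

Section GridChoice.
Variables (N : nat) (nu : R).
Hypothesis HN : (1 <= N)%nat.

Lemma grid_point_in_grid i : grid N nu (grid_point N nu i).
Proof.
  exists (Z.to_nat (i mod Z.of_nat N)). split; [|reflexivity].
  pose proof (Z.mod_pos_bound i (Z.of_nat N)). lia.
Qed.

Lemma grid_choice_antiperiodic g : antiperiodic (Z.of_nat N) (grid_choice N nu g).
Proof.
  intros i k. unfold grid_choice, grid_point.
  rewrite (Z.mul_comm (Z.of_nat N) k), Z.div_add, Z.mod_add, Z.odd_add by lia.
  destruct (Z.odd (i / Z.of_nat N)), (Z.odd k), (g _); reflexivity.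
Qed.

Lemma grid_choice_angle g i : grid_choice N nu g i = true ->
  eqm2pi (outcome_angle (grid_point N nu i) (g (grid_point N nu i)))
         ((IZR i + nu) * PI / INR N).
Proof.
  intro H. apply Bool.eqb_prop in H. unfold outcome_angle. rewrite <- H.
  assert (HNR : INR N <> 0) by (apply not_0_INR; lia).
  set (m := (i / Z.of_nat N)%Z) in *.
  set (r := (i mod Z.of_nat N)%Z).
  assert (Ei : i = (Z.of_nat N * m + r)%Z) by (apply Z.div_mod; lia).
  assert (Er : INR (Z.to_nat r) = IZR r)
    by (rewrite INR_IZR_INZ, Z2Nat.id; [reflexivity | apply Z.mod_pos_bound; lia]).
  assert (Em : m = (2 * Z.div2 m + Z.b2z (Z.odd m))%Z) by apply Z.div2_odd.
  unfold grid_point. fold r. rewrite Er.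
  exists (- Z.div2 m)%Z.
  rewrite Ei, plus_IZR, mult_IZR, <- INR_IZR_INZ, opp_IZR.
  rewrite Em at 2. rewrite plus_IZR, mult_IZR.
  destruct (Z.odd m); simpl; field; exact HNR.
Qed.

End GridChoice.

Section GridParadox.
Variables (N : nat) (nu lam : R) (M1 M2 M3 : R -> Prop).
Hypothesis HN : (1 <= N)%nat.
Hypothesis HM1 : forall x, M1 x <-> grid N 0 x.
Hypothesis HM2 : forall x, M2 x <-> grid N nu x.

(* x0 c (resp. x1 c) indexes the grid angle that A + B must match for the measurement C0
   (resp. C1) of the third party with outcome c. *)
Lemma paradox_of_targets C0 C1 (x0 x1 : bool -> Z) :
  M3 C0 -> M3 C1 ->
  (forall c, eqm2pi (beta lam (outcome_angle C0 c) + PI) ((IZR (x0 c) + nu) * PI / INR N)) ->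
  (forall c, eqm2pi (beta lam (outcome_angle C1 c) + PI) ((IZR (x1 c) + nu) * PI / INR N)) ->
  (forall c c', Z.Odd (x1 c' - x0 c)) ->
  paradox (Bstate lam) M1 M2 M3.
Proof.
  intros H0 H1 Hx0 Hx1 Hodd g1 g2 g3.
  assert (HNR : INR N <> 0) by (apply not_0_INR; lia).
  assert (Hhit : forall C x, M3 C ->
    eqm2pi (beta lam (outcome_angle C (g3 C)) + PI) ((IZR x + nu) * PI / INR N) ->
    forall i, grid_choice N 0 g1 i = true -> grid_choice N nu g2 (x - i) = true ->
    exists A B Cc, M1 A /\ M2 B /\ M3 Cc /\
      impossible (Bstate lam) A B Cc (g1 A) (g2 B) (g3 Cc)).
  { intros C x HC Hx i Hi Hj.
    exists (grid_point N 0 i), (grid_point N nu (x - i)), C.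
    split; [apply HM1, grid_point_in_grid; lia|].
    split; [apply HM2, grid_point_in_grid; lia|].
    split; [exact HC|].
    apply impossible_Bstate.
    eapply eqm2pi_trans.
    { apply eqm2pi_add; apply grid_choice_angle; eauto. }
    eapply eqm2pi_trans; [|apply eqm2pi_sym, Hx].
    apply eqm2pi_eq. rewrite minus_IZR. field. exact HNR. }
  assert (Hodd' : Z.odd (x1 (g3 C1) - x0 (g3 C0)) = true) by apply Z.odd_spec, Hodd.
  destruct (antiperiodic_sum_hits (Z.of_nat N) _ _ _ _ ltac:(lia)
              (grid_choice_antiperiodic N 0 HN g1) (grid_choice_antiperiodic N nu HN g2) Hodd')
    as [i [Hi [Hj | Hj]]]; eauto.
Qed.

Lemma paradox_of_beta_delta C0 C1 (m0 m1 s0 s1 : Z) :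
  M3 C0 -> M3 C1 ->
  Z.Even s0 -> Z.Even s1 -> Z.Odd (m0 - m1) ->
  eqm2pi (beta lam C0) (- (PI / INR N * (IZR m0 - nu))) ->
  eqm2pi (delta lam C0) (PI / INR N * IZR s0) ->
  eqm2pi (beta lam C1) (- (PI / INR N * (IZR m1 - nu))) ->
  eqm2pi (delta lam C1) (PI / INR N * IZR s1) ->
  paradox (Bstate lam) M1 M2 M3.
Proof.
  intros H0 H1 Hs0 Hs1 Hm Hb0 Hd0 Hb1 Hd1.
  assert (HNR : INR N <> 0) by (apply not_0_INR; lia).
  assert (Htarget : forall C m s,
    eqm2pi (beta lam C) (- (PI / INR N * (IZR m - nu))) ->
    eqm2pi (delta lam C) (PI / INR N * IZR s) ->
    forall c, eqm2pi (beta lam (outcome_angle C c) + PI)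
      ((IZR (Z.of_nat N - m + if c then s else 0) + nu) * PI / INR N)).
  { intros C m s Hb Hd [|]; simpl.
    - rewrite beta_add_PI. eapply eqm2pi_trans.
      { apply eqm2pi_add; [apply eqm2pi_add; [exact Hb | exact Hd] | apply eqm2pi_eq, eq_refl]. }
      apply eqm2pi_eq. rewrite plus_IZR, minus_IZR, <- INR_IZR_INZ. field. exact HNR.
    - eapply eqm2pi_trans.
      { apply eqm2pi_add; [exact Hb | apply eqm2pi_eq, eq_refl]. }
      apply eqm2pi_eq. rewrite plus_IZR, minus_IZR, <- INR_IZR_INZ. field. exact HNR. }
  apply (paradox_of_targets C0 C1
           (fun c => Z.of_nat N - m0 + if c then s0 else 0)%Z
           (fun c => Z.of_nat N - m1 + if c then s1 else 0)%Z H0 H1);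
    [apply Htarget; assumption | apply Htarget; assumption |].
  destruct Hs0 as [u Hu], Hs1 as [v Hv], Hm as [k Hk].
  intros [|] [|]; [exists (k + v - u)%Z | exists (k - u)%Z | exists (k + v)%Z | exists k]; lia.
Qed.

End GridParadox.

Lemma paradox_C0_zero N lam C1 (s t : Z) (M1 M2 M3 : R -> Prop) :
  (1 <= N)%nat -> Nat.Even N -> cos lam <> 0 ->
  Z.Even s -> Z.Odd t -> M3 0 -> M3 C1 ->
  eqm2pi (delta lam C1) (PI / INR N * IZR s) ->
  eqm2pi (beta lam C1) (- (PI / INR N * IZR t)) ->
  (forall x, M1 x <-> grid N 0 x) -> (forall x, M2 x <-> grid N 0 x) ->
  paradox (Bstate lam) M1 M2 M3.
Proof.
  intros HN HE Hlam Hs Ht H0 H1 Hd Hb HM1 HM2.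
  assert (HNR : INR N <> 0) by (apply not_0_INR; lia).
  assert (Hb0 : beta lam 0 = 0) by (apply beta_of_sin_eq0; [apply sin_0 | exact Hlam]).
  assert (Hbpi : beta lam (0 + PI) = 0 + PI).
  { apply beta_of_sin_eq0; [rewrite Rplus_0_l; apply sin_PI | exact Hlam]. }
  apply (paradox_of_beta_delta N 0 lam M1 M2 M3 HN HM1 HM2 0 C1 0 t (Z.of_nat N) s);
    try assumption.
  - destruct HE as [k ->]. exists (Z.of_nat k). lia.
  - destruct Ht as [k Hk]. exists (- k - 1)%Z. lia.
  - rewrite Hb0. apply eqm2pi_eq. simpl. ring.
  - unfold delta. rewrite Hbpi, Hb0. apply eqm2pi_eq.
    rewrite <- INR_IZR_INZ. field. exact HNR.
  - rewrite Rminus_0_r. exact Hb.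
Qed.

Lemma grid_2 x : grid 2 0 x <-> x = 0 \/ x = PI / 2.
Proof.
  split.
  - intros [k [Hk ->]]. destruct k as [|[|k]]; [left | right | lia]; simpl; field.
  - intros [-> | ->]; [exists 0%nat | exists 1%nat]; split; try lia; simpl; field.
Qed.

Lemma paradox_ghz (M1 M2 M3 : R -> Prop) :
  (forall x, M1 x <-> x = 0 \/ x = PI / 2) ->
  (forall x, M2 x <-> x = 0 \/ x = PI / 2) ->
  (forall x, M3 x <-> x = 0 \/ x = PI / 2) ->
  paradox (Bstate 0) M1 M2 M3.
Proof.
  intros HM1 HM2 HM3.
  assert (Hbeta : forall phi, cos phi = 0 -> beta 0 phi = phi - PI).
  { intros phi H. unfold beta. replace (0 / 2) with 0 by field. rewrite sin_0, cos_0, H.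
    destruct (Req_EM_T _ 0) as [_ | E]; [reflexivity | exfalso; apply E; ring]. }
  assert (Hb0 : beta 0 (PI / 2) = PI / 2 - PI) by (apply Hbeta, cos_PI2).
  assert (Hb1 : beta 0 (PI / 2 + PI) = PI / 2 + PI - PI).
  { apply Hbeta. rewrite neg_cos, cos_PI2. ring. }
  apply (paradox_C0_zero 2 0 (PI / 2) 2 1); try (apply HM3; auto).
  - lia.
  - exists 1%nat. reflexivity.
  - rewrite cos_0. apply R1_neq_R0.
  - exists 1%Z. reflexivity.
  - exists 0%Z. reflexivity.
  - unfold delta. rewrite Hb0, Hb1. apply eqm2pi_eq. simpl. field.
  - rewrite Hb0. apply eqm2pi_eq. simpl. field.
  - intro x. rewrite grid_2. apply HM1.
  - intro x. rewrite grid_2. apply HM2.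
Qed.

Lemma paradox_half_offset N lam C0 C1 (s t' : Z) (M1 M2 M3 : R -> Prop) :
  (1 <= N)%nat -> Z.Even s -> M3 C0 -> M3 C1 ->
  eqm2pi (delta lam C0) (PI / INR N * IZR s) ->
  eqm2pi (delta lam C1) (PI / INR N * IZR s) ->
  eqm2pi (beta lam C0) (- (PI / INR N * (IZR t' + 1 / 2))) ->
  eqm2pi (beta lam C1) (- (PI / INR N * (IZR s - IZR t' - 1 / 2))) ->
  (forall x, M1 x <-> grid N 0 x) -> (forall x, M2 x <-> grid N (1 / 2) x) ->
  paradox (Bstate lam) M1 M2 M3.
Proof.
  intros HN Hs H0 H1 Hd0 Hd1 Hb0 Hb1 HM1 HM2.
  assert (HNR : INR N <> 0) by (apply not_0_INR; lia).
  apply (paradox_of_beta_delta N (1 / 2) lam M1 M2 M3 HN HM1 HM2 C0 C1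
           (t' + 1) (s - t') s s); try assumption.
  - destruct Hs as [u ->]. exists (t' - u)%Z. lia.
  - eapply eqm2pi_trans; [exact Hb0|]. apply eqm2pi_eq. rewrite plus_IZR. field. exact HNR.
  - eapply eqm2pi_trans; [exact Hb1|]. apply eqm2pi_eq. rewrite minus_IZR. field. exact HNR.
Qed.

Lemma paradox_shifted_grid N lam C0 C1 (s s' t' m : Z) (t : R) (M1 M2 M3 : R -> Prop) :
  (1 <= N)%nat -> Z.Even s -> Z.Even s' -> Z.Odd t' -> M3 C0 -> M3 C1 ->
  eqm2pi (delta lam C0) (PI / INR N * IZR s) ->
  eqm2pi (delta lam C1) (PI / INR N * IZR s') ->
  eqm2pi (beta lam C1 - beta lam C0) (PI / INR N * IZR t') ->
  eqm2pi (beta lam C0) (- (PI / INR N * t)) ->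
  (forall x, M1 x <-> grid N 0 x) -> (forall x, M2 x <-> grid N (IZR m - t) x) ->
  paradox (Bstate lam) M1 M2 M3.
Proof.
  intros HN Hs Hs' Ht' H0 H1 Hd0 Hd1 Hdb Hb0 HM1 HM2.
  assert (HNR : INR N <> 0) by (apply not_0_INR; lia).
  apply (paradox_of_beta_delta N (IZR m - t) lam M1 M2 M3 HN HM1 HM2 C0 C1
           m (m - t') s s'); try assumption.
  - replace (m - (m - t'))%Z with t' by ring. exact Ht'.
  - eapply eqm2pi_trans; [exact Hb0|]. apply eqm2pi_eq. field. exact HNR.
  - replace (beta lam C1) with ((beta lam C1 - beta lam C0) + beta lam C0) by ring.
    eapply eqm2pi_trans; [apply eqm2pi_add; [exact Hdb | exact Hb0]|].
    apply eqm2pi_eq. rewrite minus_IZR. field. exact HNR.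
Qed.

Lemma lam_and_C_of_beta_delta lam C th :
  0 <= lam < PI / 2 -> 0 <= C < PI -> 0 <= th <= PI ->
  eqm2pi (beta lam C) (- th) -> eqm2pi (delta lam C) (2 * th) ->
  lam = PI / 2 - th /\ C = PI / 2.
Proof.
  intros Hlam HC Hth Hb Hd.
  assert (Hsin : 0 <= sin lam < 1).
  { split; [apply sin_ge_0; lra|].
    pose proof (cos_gt_0 lam ltac:(lra) ltac:(lra)).
    pose proof (cos_sin_sqr lam). nra. }
  assert (Hbpi : eqm2pi (beta lam (C + PI)) th).
  { rewrite beta_add_PI. eapply eqm2pi_trans; [apply eqm2pi_add; [exact Hb | exact Hd]|].
    apply eqm2pi_eq. ring. }
  destruct (eqm2pi_cos_sin _ _ Hb) as [Ecos0 _].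
  destruct (eqm2pi_cos_sin _ _ Hbpi) as [Ecos1 _].
  rewrite cos_neg in Ecos0.
  pose proof (COS_bound C) as Hx.
  rewrite cos_beta in Ecos0, Ecos1 by (rewrite ?neg_cos; nra).
  rewrite neg_cos in Ecos1.
  set (x := cos C) in *. set (p := sin lam) in *.
  assert (E0 : cos th * (1 + p * x) = x + p) by (rewrite <- Ecos0; field; nra).
  assert (E1 : cos th * (1 + p * - x) = - x + p) by (rewrite <- Ecos1; field; nra).
  assert (Hx0 : x = 0).
  { assert (E : x * (1 - p * cos th) = 0) by lra.
    pose proof (COS_bound th).
    apply Rmult_integral in E as [-> | E]; [reflexivity | nra]. }
  split.
  - rewrite Hx0 in E0. unfold p in E0. rewrite <- cos_shift in E0.
    assert (th = PI / 2 - lam) by (apply cos_inj; lra). lra.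
  - apply cos_inj; try lra. fold x. rewrite Hx0, cos_PI2. reflexivity.
Qed.

Theorem theorem20 (N : nat) (lam C0 C1 : R) (M1 M2 : R -> Prop) :
  (2 <= N)%nat ->
  0 <= lam < PI / 2 ->
  0 <= C0 < PI -> 0 <= C1 < PI ->
  is_scenario M1 M2 (fun x => x = C0 \/ x = C1) ->
  let M3 := fun x => x = C0 \/ x = C1 in
  (* condition (a): standard GHZ *)
  ((N = 2%nat /\ lam = 0 /\
      (forall x, M1 x <-> x = 0 \/ x = PI / 2) /\
      (forall x, M2 x <-> x = 0 \/ x = PI / 2) /\
      (forall x, M3 x <-> x = 0 \/ x = PI / 2))
   (* condition (b) *)
   \/ ((2 < N)%nat /\ Nat.Even N /\
       exists s t : Z, Z.Even s /\ Z.Odd t /\ (1 <= s < Z.of_nat N)%Z /\ (1 <= t <= s - 1)%Z /\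
         C0 = 0 /\
         eqm2pi (delta lam C1) (PI / INR N * IZR s) /\
         eqm2pi (beta lam C1) (- (PI / INR N * IZR t)) /\
         (forall x, M1 x <-> grid N 0 x) /\ (forall x, M2 x <-> grid N 0 x))
   (* condition (c) *)
   \/ (exists s t' : Z, Z.Even s /\ (1 <= s < Z.of_nat N)%Z /\ (0 <= t' <= s / 2 - 1)%Z /\
         C1 = PI - C0 /\
         eqm2pi (delta lam C0) (PI / INR N * IZR s) /\
         eqm2pi (delta lam C1) (PI / INR N * IZR s) /\
         eqm2pi (beta lam C0) (- (PI / INR N * (IZR t' + 1/2))) /\
         eqm2pi (beta lam C1) (- (PI / INR N * (IZR s - IZR t' - 1/2))) /\
         (forall x, M1 x <-> grid N 0 x) /\ (forall x, M2 x <-> grid N (1/2) x))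
   (* condition (d) *)
   \/ (exists s s' t' : Z, Z.Even s /\ Z.Even s' /\ Z.Odd t' /\
         (1 <= s < s')%Z /\ (s' < Z.of_nat N)%Z /\ (1 <= Z.abs t' <= Z.of_nat N - 1)%Z /\
         eqm2pi (delta lam C0) (PI / INR N * IZR s) /\
         eqm2pi (delta lam C1) (PI / INR N * IZR s') /\
         eqm2pi (beta lam C1 - beta lam C0) (PI / INR N * IZR t') /\
         exists t : R, 0 < t < IZR s /\ eqm2pi (beta lam C0) (- (PI / INR N * t)) /\
           (forall x, M1 x <-> grid N 0 x) /\
           (forall x, M2 x <-> grid N (IZR (Rceil t) - t) x))
   -> paradox (Bstate lam) M1 M2 M3)
  /\
  (* "in particular" part of (b) *)
  (forall s t : Z, (2 < N)%nat -> Nat.Even N ->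
     Z.Even s -> Z.Odd t -> (1 <= s < Z.of_nat N)%Z -> (1 <= t <= s - 1)%Z ->
     C0 = 0 ->
     eqm2pi (delta lam C1) (PI / INR N * IZR s) ->
     eqm2pi (beta lam C1) (- (PI / INR N * IZR t)) ->
     (forall x, M1 x <-> grid N 0 x) -> (forall x, M2 x <-> grid N 0 x) ->
     (2 * t = s)%Z ->
     lam = PI / 2 - PI / INR N * IZR t /\ C1 = PI / 2).
Proof.
  intros HN Hlam HC0 HC1 _ M3.
  assert (HN1 : (1 <= N)%nat) by lia.
  split.
  - intros [(-> & -> & HM1 & HM2 & HM3) | [Hb | [Hc | Hd]]].
    + exact (paradox_ghz M1 M2 M3 HM1 HM2 HM3).
    + destruct Hb as (_ & HE & s & t & Hs & Ht & _ & _ & -> & Hd & Hbt & HM1 & HM2).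
      apply (paradox_C0_zero N lam C1 s t); auto; [|now left | now right].
      apply Rgt_not_eq, cos_gt_0; lra.
    + destruct Hc as (s & t' & Hs & _ & _ & _ & Hd0 & Hd1 & Hb0 & Hb1 & HM1 & HM2).
      apply (paradox_half_offset N lam C0 C1 s t'); auto; [now left | now right].
    + destruct Hd as
        (s & s' & t' & Hs & Hs' & Ht' & _ & _ & _ & Hd0 & Hd1 & Hdb & t & _ & Hbt & HM1 & HM2).
      apply (paradox_shifted_grid N lam C0 C1 s s' t' (Rceil t) t); auto; [now left | now right].
  - intros s t _ _ _ _ [_ HsN] [Ht1 _] _ Hd Hbt _ _ Hst.
    assert (HNR : 0 < INR N) by (apply lt_0_INR; lia).
    assert (Ht : 0 <= IZR t <= INR N) by (rewrite INR_IZR_INZ; split; apply IZR_le; lia).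
    assert (Hth : 0 <= PI / INR N * IZR t <= PI).
    { replace (PI / INR N * IZR t) with (PI * (IZR t / INR N)) by (field; lra).
      assert (0 <= IZR t / INR N <= 1).
      { split; [apply Rdiv_le_0_compat | apply (Rdiv_le_1 (IZR t) (INR N))]; lra. }
      pose proof PI_RGT_0. nra. }
    apply lam_and_C_of_beta_delta; auto.
    rewrite <- Hst, mult_IZR in Hd. eapply eqm2pi_trans; [exact Hd|]. apply eqm2pi_eq. ring.
Qed.
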